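(* Let $E$ be a row-finite graph and $k$ a field. Let $K:\mathbb Z^R\to\mathbb Z^R\oplus\mathbb Z^S$ be $K(x)=((B_E^t-I)x,\,C_E^tx)$ and let $\psi:\mathbb Z^R\oplus\mathbb Z^S=\mathbb Z^{E^0}\to K_0^{\mathrm{gr}}(L_k(E))$ be $\psi(\sum_v n_v\mathbf e_v)=\sum_v n_v v(0)$. Then $\phi\circ\psi|_{\mathbb Z^R}=\psi\circ K$, the restriction of $\psi$ is an isomorphism from $\operatorname{Ker}K$ onto $\operatorname{Ker}\phi$, and $\psi$ induces an isomorphism $\overline\psi:\operatorname{Coker}K\to\operatorname{Coker}\phi$, where $\phi:K_0^{\mathrm{gr}}(L_k(E))\to K_0^{\mathrm{gr}}(L_k(E))$ is the homomorphism with $\phi(v(i))=v(i+1)-v(i)$.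
   Context: $E=(E^0,E^1,r,s)$ is a row-finite directed graph (each vertex emits finitely many edges); $S$ is its set of sinks and $R=E^0\setminus S$. The adjacency matrix $A_E$ has $A_E(v,w)=|\{e:s(e)=v,r(e)=w\}|$; listing $R$ before $S$, $A_E=\begin{pmatrix}B_E&C_E\\0&0\end{pmatrix}$ with $B_E$ the $R\times R$ and $C_E$ the $R\times S$ block. For a set $X$, $\mathbb Z^X$ denotes the direct sum $\bigoplus_X\mathbb Z$ with basis $\mathbf e_v$. $L_k(E)$ is the Leavitt path algebra (generated by $E^0\cup E^1\cup\{e^*\}$ with relations $vw=\delta_{v,w}v$, $s(e)e=e=er(e)$, $r(e)e^*=e^*=e^*s(e)$, $e^*f=\delta_{e,f}r(e)$, $v=\sum_{s(e)=v}ee^*$ for non-sinks), $\mathbb Z$-graded by $\deg e=1,\deg e^*=-1$. $K_0^{\mathrm{gr}}(L_k(E))$ is identified with the group completion of the monoid generated by $v(i)$ ($v\in E^0$, $i\in\mathbb Z$) with relations $v(i)=\sum_{e\in s^{-1}(v)}r(e)(i-1)$ for non-sinks $v$, where $v(i)$ corresponds to the class of the graded module $L_k(E)v(-i)$. *)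

From mathcomp Require Import all_boot all_order all_algebra.
Set Implicit Arguments. Unset Strict Implicit. Unset Printing Implicit Defensive.
Import GRing.Theory Num.Theory.
Local Open Scope ring_scope.

(* Row-finite graph E = (V, Ed, src, rng) is given in the theorem together with
   out : V -> seq Ed, a duplicate-free enumeration of the (finitely many)
   edges with source v.  Elements of the free abelian group Z^X (direct sum)
   are represented by formal sums l : seq (X * int), the element
   sum_{(x,n) in l} n e_x; two formal sums denote the same element iff they
   have the same coefficient function [coef]. *)

Definition coef (X : eqType) (l : seq (X * int)) (x : X) : int :=
  \sum_(p <- l | p.1 == x) p.2.

Definition fscale (X : eqType) (n : int) (l : seq (X * int)) : seq (X * int) :=
  [seq (p.1, n * p.2) | p <- l].

Definition nonsink (V Ed : eqType) (out : V -> seq Ed) (v : V) : bool :=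
  out v != [::].

(* a formal sum supported on R, i.e. an element of Z^R *)
Definition onR (V Ed : eqType) (out : V -> seq Ed) (l : seq (V * int)) : bool :=
  all (fun p => nonsink out p.1) l.

(* K(x) = ((B^t - I) x, C^t x): K(e_v) = sum_{s(e)=v} e_{r(e)} - e_v, v in R *)
Definition Kmap (V Ed : eqType) (rng : Ed -> V) (out : V -> seq Ed)
  (l : seq (V * int)) : seq (V * int) :=
  flatten [seq [seq (rng e, p.2) | e <- out p.1] ++ [:: (p.1, - p.2)] | p <- l].

(* Formal sums over the generators v(i), (v,i) in V x Z. *)
Definition psi (V : eqType) (l : seq (V * int)) : seq ((V * int) * int) :=
  [seq ((p.1, 0%R), p.2) | p <- l].

Definition phi (V : eqType) (L : seq ((V * int) * int)) : seq ((V * int) * int) :=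
  flatten [seq [:: ((p.1.1, p.1.2 + 1), p.2); (p.1, - p.2)] | p <- L].

Definition relation (V Ed : eqType) (rng : Ed -> V) (out : V -> seq Ed)
  (v : V) (i : int) : seq ((V * int) * int) :=
  ((v, i), 1) :: [seq ((rng e, i - 1), -1) | e <- out v].

Definition relcomb (V Ed : eqType) (rng : Ed -> V) (out : V -> seq Ed)
  (rl : seq ((V * int) * int)) : seq ((V * int) * int) :=
  flatten [seq fscale p.2 (relation rng out p.1.1 p.1.2) | p <- rl].

(* K_0^gr(L_k(E)) = abelian group generated by the v(i) subject to the
   relations above; two formal sums represent the same element iff their
   difference is an integer combination of relations. *)
Definition K0eq (V Ed : eqType) (rng : Ed -> V) (out : V -> seq Ed)
  (L1 L2 : seq ((V * int) * int)) : Prop :=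
  exists rl : seq ((V * int) * int),
    all (fun p => nonsink out p.1.1) rl /\
    forall x, coef L1 x - coef L2 x = coef (relcomb rng out rl) x.

(* Formal sums are handled dually: an element of a free abelian group is
   determined by its pairings with all integer-valued functions on the
   generators (coef_eqP), and psi, phi, K and the combination of defining
   relations all have explicit adjoints on such functions.  The relations
   commute with the shift v(i) |-> v(i+1), phi is injective on formal sums
   (the adjoint h |-> h(_, _ + 1) - h has a primitive on any set of levels
   bounded below), and telescoping makes every v(i) congruent to v(0) modulo
   the image of phi.  Injectivity of psi on Ker K uses the functional
   (v, i) |-> #(walks of length N + i from v to w): it is killed by every
   relation of level > -N and agrees with evaluation at w on Ker K. *)

From mathcomp Require Import all_boot all_order all_algebra zify ring.
Import GRing.Theory Num.Theory.
Local Open Scope ring_scope.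
Set Implicit Arguments. Unset Strict Implicit.

Definition pairing {X : Type} (l : seq (X * int)) (h : X -> int) : int :=
  \sum_(p <- l) p.2 * h p.1.

Section Pairing.
Variables X Y : Type.
Implicit Types (l : seq (X * int)) (h : X -> int).

Lemma pairing_nil h : pairing [::] h = 0.
Proof. exact: big_nil. Qed.

Lemma pairing_cat l1 l2 h : pairing (l1 ++ l2) h = pairing l1 h + pairing l2 h.
Proof. exact: big_cat. Qed.

Lemma pairing_map (f : X -> Y) l (h : Y -> int) :
  pairing [seq (f p.1, p.2) | p <- l] h = pairing l (fun x => h (f x)).
Proof. exact: big_map. Qed.

Lemma eq_pairing l h1 h2 : h1 =1 h2 -> pairing l h1 = pairing l h2.
Proof. by move=> eq_h; apply: eq_bigr => p _; rewrite eq_h. Qed.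

Lemma pairingB l h1 h2 :
  pairing l (fun x => h1 x - h2 x) = pairing l h1 - pairing l h2.
Proof. by rewrite /pairing -sumrB; apply: eq_bigr => p _; rewrite mulrBr. Qed.

Lemma pairingD l h1 h2 :
  pairing l (fun x => h1 x + h2 x) = pairing l h1 + pairing l h2.
Proof. by rewrite /pairing -big_split; apply: eq_bigr => p _; rewrite mulrDr. Qed.

Lemma pairingN l h : pairing l (fun x => - h x) = - pairing l h.
Proof. by rewrite /pairing -sumrN; apply: eq_bigr => p _; rewrite mulrN. Qed.

Lemma pairing0 l : pairing l (fun _ => 0) = 0.
Proof. by rewrite /pairing big1 // => p _; rewrite mulr0. Qed.

Lemma pairing_flatten (I : Type) (F : I -> seq (X * int)) (s : seq I) h :
  pairing (flatten [seq F i | i <- s]) h = \sum_(i <- s) pairing (F i) h.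
Proof. by rewrite /pairing big_flatten big_map. Qed.

End Pairing.

Section FormalSums.
Variable X : eqType.
Implicit Types (l : seq (X * int)) (h : X -> int).

Lemma eq_in_pairing l h1 h2 :
  (forall p, p \in l -> h1 p.1 = h2 p.1) -> pairing l h1 = pairing l h2.
Proof. by move=> eq_h; apply: eq_big_seq => p /eq_h ->. Qed.

Lemma pairing_fscale n l h : pairing (fscale n l) h = n * pairing l h.
Proof. by rewrite /pairing big_map mulr_sumr; apply: eq_bigr => p _; rewrite mulrA. Qed.

Lemma coef_cat l1 l2 x : coef (l1 ++ l2) x = coef l1 x + coef l2 x.
Proof. exact: big_cat. Qed.

Lemma coef_pairing l x : coef l x = pairing l (fun y => (y == x)%:R).
Proof.
rewrite /coef /pairing big_mkcond; apply: eq_bigr => p _.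
by case: eqP; rewrite ?mulr1 ?mulr0.
Qed.

Lemma pairing_coef h (S : seq X) l : uniq S -> {subset unzip1 l <= S} ->
  pairing l h = \sum_(x <- S) coef l x * h x.
Proof.
move=> uniqS supp_l; under [RHS]eq_bigr do rewrite /coef big_distrl /=.
rewrite (exchange_big_dep predT) //=; apply: eq_big_seq => p lp.
rewrite -big_filter; have -> : [seq x <- S | p.1 == x] = [:: p.1].
  rewrite -(filter_pred1_uniq uniqS) ?supp_l ?map_f //.
  by apply: eq_filter => x; rewrite eq_sym.
by rewrite big_seq1.
Qed.

Lemma coef_eqP l1 l2 : coef l1 =1 coef l2 <-> forall h, pairing l1 h = pairing l2 h.
Proof.
split=> [eq_coef h | eq_pairing x]; last by rewrite !coef_pairing.
pose S := undup (unzip1 (l1 ++ l2)).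
have [supp1 supp2] : {subset unzip1 l1 <= S} /\ {subset unzip1 l2 <= S}.
  by split=> x x_l; rewrite mem_undup /unzip1 map_cat mem_cat x_l ?orbT.
rewrite (pairing_coef h (undup_uniq _) supp1) (pairing_coef h (undup_uniq _) supp2).
by apply: eq_bigr => x _; rewrite eq_coef.
Qed.

End FormalSums.

Section Levels.
Variable T : eqType.
Implicit Types (x : seq (T * int)) (L : seq ((T * int) * int)) (f : T * int -> int).

Definition phi_adj f (g : T * int) : int := f (g.1, g.2 + 1) - f g.

Definition at_level (i : int) x : seq ((T * int) * int) := [seq ((p.1, i), p.2) | p <- x].

Definition forget_level L : seq (T * int) := [seq (p.1.1, p.2) | p <- L].

Definition all_keys (P : pred T) L := all (fun p => P p.1.1) L.

Lemma pairing_phi L f : pairing (phi L) f = pairing L (phi_adj f).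
Proof.
rewrite pairing_flatten; apply: eq_bigr => p _.
by rewrite /pairing !big_cons big_nil addr0 mulNr -mulrBr.
Qed.

Lemma pairing_at_level i x f : pairing (at_level i x) f = pairing x (fun t => f (t, i)).
Proof. exact: pairing_map. Qed.

Lemma pairing_forget_level L (h : T -> int) :
  pairing (forget_level L) h = pairing L (fun g => h g.1).
Proof. exact: pairing_map. Qed.

Lemma phi_adj_level_const (h : T -> int) g : phi_adj (fun g => h g.1) g = 0.
Proof. exact: subrr. Qed.

Lemma all_keys_at_level P i x : all_keys P (at_level i x) = all (fun p => P p.1) x.
Proof. exact: all_map. Qed.

Lemma all_forget_level P L : all (fun p => P p.1) (forget_level L) = all_keys P L.
Proof. exact: all_map. Qed.

Lemma all_keys_fscale P n L : all_keys P (fscale n L) = all_keys P L.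
Proof. exact: all_map. Qed.

Lemma all_keys_phi P L : all_keys P L -> all_keys P (phi L).
Proof.
move=> /allP PL; apply/allP => q /flattenP [s /mapP [p pL ->]].
by rewrite !inE => /orP [] /eqP -> /=; apply: PL.
Qed.

Lemma level_lower_bound L : exists N : nat, forall p, p \in L -> - N%:Z <= p.1.2.
Proof.
exists (\sum_(p <- L) absz p.1.2)%N => p pL.
have : (absz p.1.2 <= \sum_(q <- L) absz q.1.2)%N by rewrite (big_rem p pL) leq_addr.
lia.
Qed.

Definition phi_prim (N : nat) f (g : T * int) : int :=
  \sum_(k < absz (g.2 + N%:Z)) f (g.1, k%:Z - N%:Z).

Lemma phi_adj_prim N f g : - N%:Z <= g.2 -> phi_adj (phi_prim N f) g = f g.
Proof.
case: g => t i /= le_Ni; rewrite /phi_adj /phi_prim /=.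
have -> : absz (i + 1 + N%:Z) = (absz (i + N%:Z)).+1 by lia.
rewrite big_ord_recr /= addrC addrK; congr (f (t, _)); lia.
Qed.

Lemma pairing_phi_adj_inj L1 L2 :
  (forall f, pairing L1 (phi_adj f) = pairing L2 (phi_adj f)) ->
  forall f, pairing L1 f = pairing L2 f.
Proof.
move=> eq_phi f; have [N bound] := level_lower_bound (L1 ++ L2).
have prim_in L : {subset L <= L1 ++ L2} ->
    pairing L (phi_adj (phi_prim N f)) = pairing L f.
  by move=> sub; apply: eq_in_pairing => p /sub /bound; apply: phi_adj_prim.
by rewrite -(prim_in L1) -?(prim_in L2) ?eq_phi // => p p_in; rewrite mem_cat p_in ?orbT.
Qed.

Definition level_run (t : T) (m : int) (n : nat) (c : int) : seq ((T * int) * int) :=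
  [seq ((t, m + k%:Z), c) | k <- index_iota 0 n].

Lemma pairing_level_run t m n c f :
  pairing (level_run t m n c) (phi_adj f) = c * (f (t, m + n%:Z) - f (t, m)).
Proof.
rewrite /pairing big_map -mulr_sumr; congr (_ * _).
rewrite (telescope_sumr_eq (fun k => f (t, m + k%:Z))) //.
  by rewrite addr0.
by move=> k _; rewrite /phi_adj /=; congr (f (t, _) - _); lia.
Qed.

Definition level_telescope (b : int) (p : (T * int) * int) : seq ((T * int) * int) :=
  let: ((t, i), c) := p in
  if b <= i then level_run t b (absz (i - b)) c else level_run t i (absz (i - b)) (- c).

Definition telescope b L := flatten [seq level_telescope b p | p <- L].

Lemma pairing_level_telescope b p f :
  pairing (level_telescope b p) (phi_adj f) = p.2 * (f p.1 - f (p.1.1, b)).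
Proof.
case: p => [[t i] c] /=; case: ifP => le_bi; rewrite pairing_level_run.
  by have -> : b + (absz (i - b))%:Z = i by lia.
have -> : i + (absz (i - b))%:Z = b by lia.
by rewrite mulNr -mulrN opprB.
Qed.

Lemma pairing_telescope b L f :
  pairing (telescope b L) (phi_adj f) = pairing L f - pairing L (fun g => f (g.1, b)).
Proof.
rewrite pairing_flatten -pairingB.
by apply: eq_bigr => p _; rewrite pairing_level_telescope.
Qed.

Lemma all_keys_telescope P b L : all_keys P L -> all_keys P (telescope b L).
Proof.
move=> /allP PL; apply/allP => q /flattenP [s /mapP [[[t i] c] pL ->]] /=.
by case: ifP => _ /mapP [k _ ->] /=; apply: (PL _ pL).
Qed.

End Levels.

Section Graph.
Variables (V Ed : eqType) (rng : Ed -> V) (out : V -> seq Ed).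
Implicit Types (x y z : seq (V * int)) (L rl : seq ((V * int) * int)).
Implicit Types (h : V -> int) (f : V * int -> int).

Definition out_sum h (v : V) : int := \sum_(e <- out v) h (rng e).

Definition Kmap_adj h (v : V) : int := out_sum h v - h v.

Definition relcomb_adj f (g : V * int) : int := f g - out_sum (fun u => f (u, g.2 - 1)) g.1.

Definition kerK x := forall w, coef (Kmap rng out x) w = 0.

Definition walks (n : nat) (w : V) : V -> int := iter n out_sum (fun v => (v == w)%:R).

Lemma pairing_psi x f : pairing (psi x) f = pairing x (fun v => f (v, 0)).
Proof. exact: pairing_map. Qed.

Lemma pairing_Kmap x h : pairing (Kmap rng out x) h = pairing x (Kmap_adj h).
Proof.
rewrite pairing_flatten; apply: eq_bigr => p _.
rewrite pairing_cat /pairing big_map big_cons big_nil /= addr0 -mulr_sumr.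
by rewrite mulNr -mulrBr.
Qed.

Lemma pairing_relcomb rl f : pairing (relcomb rng out rl) f = pairing rl (relcomb_adj f).
Proof.
rewrite pairing_flatten; apply: eq_bigr => -[[v i] c] _.
rewrite pairing_fscale /relation /pairing big_cons big_map /= mul1r.
rewrite /relcomb_adj /out_sum; under eq_bigr do rewrite mulN1r.
by rewrite sumrN.
Qed.

Lemma relcomb_adj_phi_adj f g : relcomb_adj (phi_adj f) g = phi_adj (relcomb_adj f) g.
Proof.
case: g => v i; rewrite /relcomb_adj /phi_adj /out_sum /= sumrB.
have -> : i - 1 + 1 = i + 1 - 1 by lia.
ring.
Qed.

Lemma relcomb_adj_level_const h g : relcomb_adj (fun g => h g.1) g = - Kmap_adj h g.1.
Proof. by rewrite /relcomb_adj /Kmap_adj opprB. Qed.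

Lemma kerKP x : kerK x <-> forall h, pairing x (Kmap_adj h) = 0.
Proof.
split=> [Kx h | Kx w]; last by rewrite coef_pairing pairing_Kmap Kx.
rewrite -pairing_Kmap -(pairing_nil h); move: h; apply/coef_eqP => w.
by rewrite Kx /coef big_nil.
Qed.

Lemma kerK_pairing_iter x : kerK x -> forall n h, pairing x (iter n out_sum h) = pairing x h.
Proof.
move=> /kerKP Kx; elim=> //= n IH h; rewrite -[RHS]IH; apply/eqP.
by rewrite -subr_eq0 -pairingB; apply/eqP/Kx.
Qed.

Lemma K0eqP L1 L2 : K0eq rng out L1 L2 <->
  exists2 rl, all_keys (nonsink out) rl &
    forall f, pairing L1 f = pairing L2 f + pairing rl (relcomb_adj f).
Proof.
split=> [[rl [rl_R eq_coef]] | [rl rl_R eq_pairing]]; exists rl => //.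
  move=> f; rewrite -pairing_relcomb -pairing_cat; move: f; apply/coef_eqP => g.
  by rewrite coef_cat -eq_coef addrC subrK.
split=> // g.
have /coef_eqP eq_coef f : pairing L1 f = pairing (L2 ++ relcomb rng out rl) f.
  by rewrite pairing_cat pairing_relcomb.
by rewrite eq_coef coef_cat addrC addKr.
Qed.

Lemma pairing_phi_psi x f : pairing (phi (psi x)) f =
  pairing (psi (Kmap rng out x)) f + pairing (at_level 1 x) (relcomb_adj f).
Proof.
rewrite pairing_phi !pairing_psi pairing_Kmap pairing_at_level -pairingD.
apply: eq_pairing => v; rewrite /phi_adj /relcomb_adj /Kmap_adj /= subrr add0r.
ring.
Qed.

Lemma K0eq_phi L1 L2 : K0eq rng out L1 L2 -> K0eq rng out (phi L1) (phi L2).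
Proof.
move=> /K0eqP [rl rl_R eq12]; apply/K0eqP; exists (phi rl); first exact: all_keys_phi.
move=> f; rewrite !pairing_phi eq12; congr (_ + _).
by apply: eq_pairing => g; rewrite relcomb_adj_phi_adj.
Qed.

Lemma K0eq_phi_psi x : onR out x -> K0eq rng out (phi (psi x)) (psi (Kmap rng out x)).
Proof.
move=> xR; apply/K0eqP; exists (at_level 1 x); last exact: pairing_phi_psi.
by rewrite all_keys_at_level.
Qed.

Lemma K0eq_phi_psi_kerK x : onR out x -> kerK x -> K0eq rng out (phi (psi x)) [::].
Proof.
move=> xR /kerKP Kx; apply/K0eqP; exists (at_level 1 x); first by rewrite all_keys_at_level.
by move=> f; rewrite pairing_phi_psi pairing_psi pairing_Kmap Kx !pairing_nil.
Qed.

Lemma psi_kerK_inj x y : kerK x -> kerK y -> K0eq rng out (psi x) (psi y) -> coef x =1 coef y.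
Proof.
move=> Kx Ky /K0eqP [rl _ eq_xy] w.
have [N bound] := level_lower_bound rl.
pose f g := walks (absz (g.2 + N.+1%:Z)) w g.1.
have rel0 : pairing rl (relcomb_adj f) = 0.
  rewrite -(pairing0 rl); apply: eq_in_pairing => -[[v i] c] /bound /= le_Ni.
  rewrite /relcomb_adj /f /=.
  have -> : absz (i + N.+1%:Z) = (absz (i - 1 + N.+1%:Z)).+1 by lia.
  exact: subrr.
have f_level0 l : pairing l (fun v => f (v, 0)) = pairing l (walks N.+1 w).
  exact: eq_pairing.
move: (eq_xy f); rewrite rel0 addr0 !pairing_psi !f_level0 /walks.
by rewrite !kerK_pairing_iter // -!coef_pairing.
Qed.

Lemma ker_phi_psi_kerK L : K0eq rng out (phi L) [::] ->
  exists x, [/\ onR out x, kerK x & K0eq rng out (psi x) L].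
Proof.
move=> /K0eqP [rl rl_R eq_phiL].
have {}eq_phiL f : pairing L (phi_adj f) = pairing rl (relcomb_adj f).
  by rewrite -pairing_phi eq_phiL pairing_nil add0r.
pose x := forget_level rl.
have Kx h : pairing x (Kmap_adj h) = 0.
  have := eq_phiL (fun g => h g.1).
  rewrite (eq_pairing _ (phi_adj_level_const h)) pairing0.
  rewrite (eq_pairing _ (relcomb_adj_level_const h)) pairingN pairing_forget_level.
  by move/esym/eqP; rewrite oppr_eq0 => /eqP.
exists x; split; [by rewrite /onR all_forget_level | exact/kerKP |].
(* phi is injective, and after applying it the relations at the levels of rl
   and at level 1 differ by phi of a telescope. *)
apply/K0eqP; exists (fscale (-1) (telescope 1 rl)).
  by rewrite all_keys_fscale; apply: all_keys_telescope.
move=> f; rewrite -pairing_relcomb -pairing_cat; move: f.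
apply: pairing_phi_adj_inj => f; rewrite pairing_cat pairing_relcomb pairing_fscale.
rewrite (eq_pairing _ (relcomb_adj_phi_adj f)) pairing_telescope eq_phiL.
rewrite mulN1r opprB addrCA subrr addr0 pairing_psi pairing_forget_level.
apply/eqP; rewrite -subr_eq0 -pairingB; apply/eqP.
rewrite -[RHS](Kx (fun u => f (u, 0))) pairing_forget_level.
apply: eq_pairing => g; rewrite /phi_adj /relcomb_adj /Kmap_adj /= subrr.
ring.
Qed.

Lemma K0eq_psi_coker x y z : onR out z ->
  (forall w, coef x w = coef y w + coef (Kmap rng out z) w) ->
  exists L', K0eq rng out (psi x) (psi y ++ phi L').
Proof.
move=> zR eq_x; exists (psi z); apply/K0eqP; exists (fscale (-1) (at_level 1 z)).
  by rewrite all_keys_fscale all_keys_at_level.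
have /coef_eqP {}eq_x : coef x =1 coef (y ++ Kmap rng out z) by move=> w; rewrite coef_cat.
move=> f; rewrite pairing_cat pairing_phi_psi pairing_fscale !pairing_psi eq_x pairing_cat.
by rewrite mulN1r addrA addrK.
Qed.

Lemma psi_coker_inj x y L' : K0eq rng out (psi x) (psi y ++ phi L') ->
  exists z, onR out z /\ forall w, coef x w = coef y w + coef (Kmap rng out z) w.
Proof.
move=> /K0eqP [rl rl_R eq_xy]; exists (forget_level (fscale (-1) rl)); split.
  by rewrite /onR all_forget_level all_keys_fscale.
move=> w; rewrite -coef_cat; move: w; apply/coef_eqP => h.
have := eq_xy (fun g => h g.1).
rewrite pairing_cat pairing_phi (eq_pairing _ (phi_adj_level_const h)) pairing0 addr0.
rewrite (eq_pairing _ (relcomb_adj_level_const h)) pairingN !pairing_psi /= => ->.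
by rewrite pairing_cat pairing_Kmap pairing_forget_level pairing_fscale mulN1r.
Qed.

Lemma psi_coker_surj L : exists x L', K0eq rng out L (psi x ++ phi L').
Proof.
exists (forget_level L), (telescope 0 L); apply/K0eqP; exists [::] => // f.
rewrite pairing_nil addr0 pairing_cat pairing_phi pairing_telescope.
by rewrite pairing_psi pairing_forget_level addrC subrK.
Qed.

End Graph.

Unset Implicit Arguments.

Theorem proposition4p4 (V Ed : eqType) (src rng : Ed -> V) (out : V -> seq Ed)
  (Huniq : forall v, uniq (out v))
  (Hout : forall v e, (e \in out v) = (src e == v)) :
  [/\
   (* phi is a well-defined endomorphism of K_0^gr *)
   (forall L1 L2, K0eq rng out L1 L2 -> K0eq rng out (phi L1) (phi L2)),
   (* phi o psi|_{Z^R} = psi o K *)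
   (forall x, onR out x ->
      K0eq rng out (phi (psi x)) (psi (Kmap rng out x))),
   (* psi restricts to an isomorphism Ker K -> Ker phi *)
   [/\ (forall x, onR out x -> (forall w, coef (Kmap rng out x) w = 0) ->
          K0eq rng out (phi (psi x)) [::]),
       (forall x y, onR out x -> onR out y ->
          (forall w, coef (Kmap rng out x) w = 0) ->
          (forall w, coef (Kmap rng out y) w = 0) ->
          K0eq rng out (psi x) (psi y) -> forall w, coef x w = coef y w) &
       (forall L, K0eq rng out (phi L) [::] ->
          exists x, [/\ onR out x, (forall w, coef (Kmap rng out x) w = 0) &
                        K0eq rng out (psi x) L])] &
   (* psi induces an isomorphism Coker K -> Coker phi *)
   [/\ (forall x y z, onR out z ->
          (forall w, coef x w = coef y w + coef (Kmap rng out z) w) ->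
          exists L', K0eq rng out (psi x) (psi y ++ phi L')),
       (forall x y L', K0eq rng out (psi x) (psi y ++ phi L') ->
          exists z, onR out z /\
            forall w, coef x w = coef y w + coef (Kmap rng out z) w) &
       (forall L, exists x L', K0eq rng out L (psi x ++ phi L'))]].
Proof.
split.
- exact: K0eq_phi.
- exact: K0eq_phi_psi.
- split.
  + exact: K0eq_phi_psi_kerK.
  + by move=> x y _ _; apply: psi_kerK_inj.
  + exact: ker_phi_psi_kerK.
- split.
  + exact: K0eq_psi_coker.
  + exact: psi_coker_inj.
  + exact: psi_coker_surj.
Qed.
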